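(* There is an absolute constant $\delta>0$ such that for every constant $c_1\in(0,0.01)$, every sufficiently large $a$, every set $A$ of size $a$ and every $r\in\{0,1\}^A$, at least one of the functions $x\mapsto h^{(-,0)}(x\oplus r)$ and $x\mapsto h^{(-,1)}(x\oplus r)$ on $\{0,1\}^A$ has distance at least $\delta$ from every monotone function on $\{0,1\}^A$.
   Context: On $\{0,1\}^A$ with $|A|=a$: $h^{(-,0)}(z)=1$ iff $|z|>a/2+c_1\sqrt a$, and $h^{(-,1)}(z)=1$ iff $|z|<a/2-c_1\sqrt a$, where $|z|$ is Hamming weight. $\oplus$ is coordinatewise XOR. Distance between functions is the fraction of points of $\{0,1\}^A$ (uniform measure) on which they differ; monotone means $f(x)\le f(y)$ whenever $x\le y$ coordinatewise. *)

From mathcomp Require Import all_boot.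
From Stdlib Require Import Reals.
Set Implicit Arguments. Unset Strict Implicit. Unset Printing Implicit Defensive.
Local Open Scope R_scope.

Definition cube (A : finType) := {ffun A -> bool}.

Definition hweight (A : finType) (z : cube A) : nat := #|[set i | z i]|.

Definition xorc (A : finType) (x r : cube A) : cube A := [ffun i => xorb (x i) (r i)].

Definition hm0 (c1 : R) (A : finType) (z : cube A) : bool :=
  if Rlt_dec ((INR #|A|) / 2 + c1 * sqrt (INR #|A|))%R (INR (hweight z)) then true else false.

Definition hm1 (c1 : R) (A : finType) (z : cube A) : bool :=
  if Rlt_dec (INR (hweight z)) ((INR #|A|) / 2 - c1 * sqrt (INR #|A|))%R then true else false.

Definition fdist (A : finType) (f g : cube A -> bool) : R :=
  (INR #|[set x : cube A | f x != g x]| / INR #|{: cube A}|)%R.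

Definition monotone (A : finType) (f : cube A -> bool) : Prop :=
  forall x y : cube A, (forall i, x i ==> y i) -> f x ==> f y.

From mathcomp Require Import all_boot.
From Stdlib Require Import Reals Lra Lia.
From mathcomp Require all_order all_algebra zify ring.

Set Implicit Arguments.
Unset Strict Implicit.
Unset Printing Implicit Defensive.

(* Complementing r turns h^{(-,1)}(x ⊕ r) into h^{(-,0)}(x ⊕ ~r), so we may assume
   that the set T of ones of r has m >= a/2 elements; put n = a - m.  Writing p and j for the
   numbers of ones of x outside and inside T, h^{(-,0)}(x ⊕ r) = 1 iff j + K <= p + m,
   where K is the least integer above a/2 + c1 sqrt a.  On the fibre of a fixed p this
   is a decreasing threshold in j, whereas the density of a monotone g on the j-th level
   of the fibre increases with j (double counting of single-coordinate flips).  Hence g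
   disagrees with h on the fibre on at least the smaller of the two binomial masses on
   either side of the threshold.  Since c1 < 1/100, the offset E = 2K - a is at most
   sqrt m / 10.  Chebyshev's inequality and unimodality show that |2p - n - E| <= 0.6 sqrt m
   for p carrying 1/50 of the binomial weight, and the bound C(m, j)^2 m <= 4^m shows that
   for such p both masses are at least 2^m / 20. *)

Module BinomialEstimates.
Import ssrnat all_order all_algebra zify ring.
Import Order.TTheory GRing.Theory Num.Theory.

Lemma leq_sum_subpred (I : Type) (r : seq I) (P Q : pred I) (F : I -> nat) :
  (forall i, P i -> Q i) -> (\sum_(i <- r | P i) F i <= \sum_(i <- r | Q i) F i)%N.
Proof.
move=> PQ; rewrite [X in (_ <= X)%N](bigID P) /=.
apply: leq_trans (leq_addr _ _); apply: eq_leq; apply: eq_bigl => i.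
by case Pi: (P i); rewrite ?andbF ?andbT ?(PQ _ Pi).
Qed.

Lemma sum_binomial n : (\sum_(0 <= j < n.+1) 'C(n, j) = 2 ^ n)%N.
Proof.
rewrite -[2]/(1 + 1)%N expnDn big_mkord.
by apply: eq_bigr => i _; rewrite !exp1n !muln1.
Qed.

Lemma sum_binomial_upper_lower m :
  (\sum_(0 <= j < m.+1 | m <= 2 * j) 'C(m, j) =
   \sum_(0 <= j < m.+1 | 2 * j <= m) 'C(m, j))%N.
Proof.
rewrite big_nat_rev /= add0n; apply: congr_big_nat => // i.
  by move=> /andP[_ lt_im]; rewrite subSS; lia.
by move=> /andP[_ /andP[_ lt_im]]; rewrite subSS bin_sub // -ltnS.
Qed.

Lemma sum_binomial_upper_half m :
  (2 ^ m <= 2 * \sum_(0 <= j < m.+1 | m <= 2 * j) 'C(m, j))%N.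
Proof.
rewrite -sum_binomial (bigID (fun j => 2 * j <= m)%N) /= mul2n -addnn.
rewrite {1}sum_binomial_upper_lower leq_add2l.
by apply: leq_sum_subpred => i; lia.
Qed.

Lemma sum_binomial_lower_half m :
  (2 ^ m <= 2 * \sum_(0 <= j < m.+1 | 2 * j <= m) 'C(m, j))%N.
Proof. by rewrite -sum_binomial_upper_lower sum_binomial_upper_half. Qed.

Lemma leq_bin_succ n k : (2 * k < n)%N -> ('C(n, k) <= 'C(n, k.+1))%N.
Proof.
move=> lt_2k_n; rewrite -(leq_pmul2l (ltn0Sn k)) mul_bin_left leq_mul2r; lia.
Qed.

Lemma leq_bin2r_half n i j : (i <= j)%N -> (2 * j <= n)%N -> ('C(n, i) <= 'C(n, j))%N.
Proof.
move=> /subnKC <-; elim: (j - i)%N => [|d IHd] le_n; first by rewrite addn0.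
by rewrite addnS (leq_trans (IHd _)) ?leq_bin_succ //; lia.
Qed.

Lemma leq_bin_mid n j : ('C(n, j) <= 'C(n, n./2))%N.
Proof.
have [le_jn|lt_nj] := leqP j n; last by rewrite bin_small.
have [le_2j_n|lt_n_2j] := leqP (2 * j) n; first by apply: leq_bin2r_half; lia.
by rewrite -bin_sub //; apply: leq_bin2r_half; lia.
Qed.

Lemma bin_odd_mid k : 'C(k.*2.+1, k.+1) = 'C(k.*2.+1, k).
Proof. by rewrite -bin_sub; [congr 'C(_, _) | ]; lia. Qed.

Lemma bin_double_mid k : 'C(k.*2.+2, k.+1) = (2 * 'C(k.*2.+1, k))%N.
Proof. by rewrite binS bin_odd_mid mul2n addnn. Qed.

Lemma central_bin_sq_bound k : ('C(k.*2, k) ^ 2 * k.*2.+1 <= 16 ^ k)%N.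
Proof.
elim: k => [|k IHk]; first by rewrite bin0.
have step : (k.+1 * 'C(k.*2.+2, k.+1) = 2 * k.*2.+1 * 'C(k.*2, k))%N.
  by rewrite bin_double_mid -bin_odd_mid mulnCA -mul_bin_diag /=; lia.
rewrite doubleS -(@leq_pmul2l (k.+1 ^ 2)) ?expn_gt0 //.
have -> : (k.+1 ^ 2 * ('C(k.*2.+2, k.+1) ^ 2 * k.*2.+3) =
           (4 * k.*2.+1 * k.*2.+3) * ('C(k.*2, k) ^ 2 * k.*2.+1))%N.
  by rewrite mulnA -expnMn step; ring.
rewrite [16 ^ _]expnS [X in (_ <= X)%N]mulnA; apply: (leq_mul _ IHk); lia.
Qed.

Lemma bin_sq_bound m j : ('C(m, j) ^ 2 * m <= 4 ^ m)%N.
Proof.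
apply: (@leq_trans ('C(m, m./2) ^ 2 * m)); first by rewrite leq_mul2r leq_exp2r ?leq_bin_mid ?orbT.
have em := odd_double_half m; set k := m./2 in em *; clearbody k.
case: (odd m) em => /= <-.
- have e : (4 * 4 ^ k.*2.+1 = 16 ^ k.+1)%N by rewrite -expnS -doubleS -mul2n expnM.
  rewrite -(leq_pmul2l (isT : 0 < 4)) e; apply: leq_trans (central_bin_sq_bound k.+1).
  rewrite doubleS bin_double_mid expnMn mulnA; apply: leq_mul => //; lia.
- rewrite -[in X in (_ <= X)%N]mul2n expnM.
  by apply: leq_trans (central_bin_sq_bound k); rewrite leq_mul2l; lia.
Qed.

Lemma big_nat_window (N a b : nat) (F : nat -> nat) : (b <= N)%N ->
  (\sum_(a <= p < b) F p = \sum_(0 <= p < N | a <= p < b) F p)%N.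
Proof.
move=> le_bN; rewrite (big_nat_widen _ _ _ _ _ le_bN) (@big_nat_widenl _ _ _ a 0) //.
by apply: eq_bigl => p; rewrite andbC.
Qed.

Lemma window_bound (N lo w B : nat) (P : pred nat) (F : nat -> nat) :
  (forall j, P j -> lo <= j < lo + w)%N -> (forall j, F j <= B)%N ->
  (\sum_(0 <= j < N | P j) F j <= w * B)%N.
Proof.
move=> P_window le_FB; set N' := maxn N (lo + w).
rewrite (big_nat_widen _ _ N') ?leq_maxl //.
apply: (@leq_trans (\sum_(0 <= j < N' | lo <= j < lo + w) B)).
  apply: (@leq_trans (\sum_(0 <= j < N' | P j && (j < N)) B)); first exact: leq_sum.
  by apply: leq_sum_subpred => j /andP[/P_window].
by rewrite -big_nat_window ?leq_maxr // sum_nat_const_nat addKn.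
Qed.

Lemma mid_window_mass m t0 : (400 <= m)%N -> (100 * t0 ^ 2 <= 36 * m)%N ->
  (20 * ((t0 %/ 2 + 2) * 'C(m, m./2)) <= 8 * 2 ^ m)%N.
Proof.
move=> m_large t0_small; set C := 'C(m, m./2).
have C_sq := bin_sq_bound m m./2; rewrite -/C in C_sq.
have sq_4m k : ((k * 2 ^ m) ^ 2 = k ^ 2 * 4 ^ m)%N by rewrite expnMn -expnM (mulnC m 2) expnM.
have t0C : (10 * t0 * C <= 6 * 2 ^ m)%N.
  rewrite -(@leq_exp2r _ _ 2) // sq_4m.
  apply: (@leq_trans (36 * (C ^ 2 * m))); last by rewrite leq_mul2l C_sq orbT.
  have -> : ((10 * t0 * C) ^ 2 = (100 * t0 ^ 2) * C ^ 2)%N by ring.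
  have -> : (36 * (C ^ 2 * m) = 36 * m * C ^ 2)%N by ring.
  by rewrite leq_mul2r t0_small orbT.
have C_small : (40 * C <= 2 * 2 ^ m)%N.
  rewrite -(@leq_exp2r _ _ 2) // sq_4m.
  apply: (@leq_trans (4 * (C ^ 2 * m))); last by rewrite leq_mul2l C_sq orbT.
  have -> : (4 * (C ^ 2 * m) = 4 * m * C ^ 2)%N by ring.
  rewrite expnMn leq_mul2r; lia.
lia.
Qed.

Lemma tail_from_half (m t0 lo : nat) (P Q : pred nat) :
  (400 <= m)%N -> (100 * t0 ^ 2 <= 36 * m)%N ->
  (2 ^ m <= 2 * \sum_(0 <= j < m.+1 | Q j) 'C(m, j))%N ->
  (forall j, Q j && ~~ P j -> lo <= j < lo + (t0 %/ 2 + 2))%N ->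
  (2 ^ m <= 20 * \sum_(0 <= j < m.+1 | P j) 'C(m, j))%N.
Proof.
move=> m_large t0_small Q_half Q_window.
have split_Q : (\sum_(0 <= j < m.+1 | Q j) 'C(m, j) <=
    \sum_(0 <= j < m.+1 | P j) 'C(m, j) +
    \sum_(0 <= j < m.+1 | Q j && ~~ P j) 'C(m, j))%N.
  rewrite (bigID P) /= leq_add2r.
  by apply: leq_sum_subpred => j /andP[].
have := window_bound m.+1 (F := fun j => 'C(m, j)) Q_window (leq_bin_mid m).
have := mid_window_mass m_large t0_small.
lia.
Qed.

Local Open Scope ring_scope.

Lemma binomial_tails_large (m : nat) (t : int) :
  (400 <= m)%N -> 100 * t ^+ 2 <= (36 * m)%N%:Z ->
  (2 ^ m <= 20 * \sum_(0 <= j < m.+1 | ((2 * j)%:Z - m%:Z <= t)%R) 'C(m, j))%N /\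
  (2 ^ m <= 20 * \sum_(0 <= j < m.+1 | (t < (2 * j)%:Z - m%:Z)%R) 'C(m, j))%N.
Proof.
move=> m_large t_small.
have t0_small : (100 * `|t|%N ^ 2 <= 36 * m)%N.
  by rewrite -lez_nat PoszM -abszX abszE ger0_norm ?sqr_ge0.
split.
- apply: (tail_from_half (lo := (m - `|t|) %/ 2) m_large t0_small
    (sum_binomial_lower_half m)).
  by move=> j /andP[]; rewrite -ltNge; lia.
- apply: (tail_from_half (lo := m %/ 2) m_large t0_small (sum_binomial_upper_half m)).
  by move=> j /andP[]; rewrite -leNgt; lia.
Qed.

Lemma ler_sqr_norm (R : realDomainType) (x y : R) : `|x| <= `|y| -> x ^+ 2 <= y ^+ 2.
Proof.
move=> le_xy; rewrite -[x ^+ 2]real_normK -1?[y ^+ 2]real_normK ?num_real //.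
by apply: lerXn2r; rewrite ?nnegrE.
Qed.

Lemma sum_Posz (I : Type) (r : seq I) (P : pred I) (F : I -> nat) :
  Posz (\sum_(i <- r | P i) F i)%N = \sum_(i <- r | P i) Posz (F i).
Proof. by rewrite (big_morph Posz PoszD (erefl (Posz 0))). Qed.

Lemma sum_pascal n (F : nat -> int) :
  \sum_(0 <= p < n.+2) 'C(n.+1, p)%:Z * F p =
  \sum_(0 <= p < n.+1) 'C(n, p)%:Z * (F p + F p.+1).
Proof.
rewrite big_nat_recl // bin0 mul1r.
under eq_bigr do rewrite binS PoszD mulrDl.
rewrite big_split /=.
under [in RHS]eq_bigr do rewrite mulrDr.
rewrite [in RHS]big_split /= addrA; congr (_ + _).
rewrite big_nat_recr //= bin_small // mul0r addr0.
by rewrite [in RHS]big_nat_recl // bin0 mul1r.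
Qed.

Lemma binomial_variance n :
  \sum_(0 <= p < n.+1) 'C(n, p)%:Z * ((2 * p)%:Z - n%:Z) ^+ 2 = (n * 2 ^ n)%N%:Z.
Proof.
elim: n => [|n IHn]; first by rewrite big_nat1.
rewrite sum_pascal.
under eq_bigr => p _.
  have -> : 'C(n, p)%:Z * (((2 * p)%:Z - n.+1%:Z) ^+ 2 + ((2 * p.+1)%:Z - n.+1%:Z) ^+ 2) =
      2 * ('C(n, p)%:Z * ((2 * p)%:Z - n%:Z) ^+ 2) + 2 * 'C(n, p)%:Z.
    rewrite mulnS -addn1 !PoszD; ring.
  over.
rewrite big_split /= -!big_distrr /= IHn -sum_Posz sum_binomial.
by rewrite -!PoszM -PoszD expnS; congr Posz; ring.
Qed.

Lemma binomial_chebyshev n h r : (r ^ 2 <= n < r.+1 ^ 2)%N -> (2 * h <= n <= 2 * h + 1)%N ->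
  (r.+1 <= h)%N -> (h + r.+1 <= n)%N ->
  (3 * 2 ^ n <= 4 * \sum_(h - r.+1 <= p < h + r.+2) 'C(n, p))%N.
Proof.
move=> r_sqrt h_half r_h hr_n.
have n_gt0 : (0 < n)%N by lia.
set window := fun p => (h - r.+1 <= p < h + r.+2)%N.
set Out := (\sum_(0 <= p < n.+1 | ~~ window p) 'C(n, p))%N.
have total : (2 ^ n = \sum_(h - r.+1 <= p < h + r.+2) 'C(n, p) + Out)%N.
  rewrite -sum_binomial (bigID window) /= -big_nat_window //; lia.
suff Out_small : (4 * Out <= 2 ^ n)%N by lia.
rewrite -(leq_pmul2l n_gt0) mulnA -lez_nat -binomial_variance (bigID window) /=.
apply: ler_wpDl; first by apply: sumr_ge0 => p _; rewrite mulr_ge0 ?sqr_ge0.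
rewrite /Out big_distrr /= sum_Posz [X in X <= _]big_nat_cond [X in _ <= X]big_nat_cond.
apply: ler_sum => p /andP[/andP[_ le_pn] out_p].
rewrite PoszM mulrC ler_wpM2l //.
have far : `|(2 * r + 3)%N%:Z| <= `|(2 * p)%:Z - n%:Z|.
  by move: out_p; rewrite /window negb_and -!ltnNge; lia.
apply: le_trans _ (ler_sqr_norm far); rewrite expr2 -PoszM lez_nat; nia.
Qed.

Lemma bin_minn n p : (p <= n)%N -> 'C(n, p) = 'C(n, minn p (n - p)).
Proof. by move=> le_pn; case: leqP => // _; rewrite bin_sub. Qed.

Lemma leq_bin_closer n p q : (q <= n)%N -> (minn p (n - p) <= minn q (n - q))%N ->
  ('C(n, p) <= 'C(n, q))%N.
Proof.
move=> le_qn closer; have [le_pn|lt_np] := leqP p n; last by rewrite bin_small.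
by rewrite (bin_minn le_pn) (bin_minn le_qn) leq_bin2r_half //; lia.
Qed.

Lemma binomial_window_average n h d R :
  (2 * h <= n <= 2 * h + 1)%N -> (d <= R)%N -> (R <= h)%N -> (h + R <= n)%N ->
  ((2 * d + 1) * \sum_(h - R <= p < h + R + 1) 'C(n, p) <=
   (2 * R + 1) * \sum_(h - d <= p < h + d + 1) 'C(n, p))%N.
Proof.
move=> h_half le_dR le_Rh le_hRn; set v := 'C(n, h - d).
have inner p : (h - d <= p < h + d + 1)%N -> (v <= 'C(n, p))%N.
  by move=> p_in; apply: leq_bin_closer; lia.
have outer p : (h - R <= p < h - d)%N || (h + d + 1 <= p < h + R + 1)%N ->
    ('C(n, p) <= v)%N.
  by move=> p_out; apply: leq_bin_closer; lia.
rewrite (big_cat_nat _ (n := h - d)) /=; try lia.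
rewrite (big_cat_nat _ (n := h + d + 1) (m := h - d)) /=; try lia.
set Lo := (\sum_(h - R <= p < h - d) _)%N; set In := (\sum_(h - d <= p < _) _)%N.
set Hi := (\sum_(h + d + 1 <= p < _) _)%N.
have In_ge : ((2 * d + 1) * v <= In)%N.
  have -> : (2 * d + 1 = (h + d + 1) - (h - d))%N by lia.
  rewrite -sum_nat_const_nat big_nat_cond [In]big_nat_cond.
  by apply: leq_sum => p /andP[p_in _]; apply: inner.
have side_le (a b : nat) : (b - a <= R - d)%N ->
    (forall p, a <= p < b -> 'C(n, p) <= v)%N ->
    ((2 * d + 1) * \sum_(a <= p < b) 'C(n, p) <= (R - d) * In)%N.
  move=> width le_v; apply: (@leq_trans ((2 * d + 1) * ((R - d) * v))).
    rewrite leq_mul2l; apply/orP; right; apply: (@leq_trans ((b - a) * v)).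
      rewrite -sum_nat_const_nat big_nat_cond [X in (_ <= X)%N]big_nat_cond.
      by apply: leq_sum => p /andP[p_in _]; apply: le_v.
    by rewrite leq_mul2r width orbT.
  by rewrite mulnCA leq_mul2l In_ge orbT.
have := side_le (h - R)%N (h - d)%N ltac:(lia) (fun p hp => outer p ltac:(lia)).
have := side_le (h + d + 1)%N (h + R + 1)%N ltac:(lia) (fun p hp => outer p ltac:(lia)).
rewrite -/Lo -/Hi !mulnDr.
have -> : ((2 * R + 1) * In = (R - d) * In + (2 * d + 1) * In + (R - d) * In)%N.
  by rewrite -!mulnDl; congr (_ * _)%N; lia.
lia.
Qed.

Lemma half_bounds n : (2 * n./2 <= n <= 2 * n./2 + 1)%N.
Proof. by rewrite -{2 4}(odd_double_half n) -!mul2n; case: (odd n) => /=; lia. Qed.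

Lemma bin_mid_mass n : (2 ^ n <= n.+1 * 'C(n, n./2))%N.
Proof.
rewrite -sum_binomial -{2}(subn0 n.+1) -sum_nat_const_nat.
by apply: leq_sum => p _; apply: leq_bin_mid.
Qed.

Lemma central_window_mass n :
  (2 ^ n <= 50 * \sum_(n./2 - Nat.sqrt n %/ 10 <= p < n./2 + Nat.sqrt n %/ 10 + 1) 'C(n, p))%N.
Proof.
have h_half := half_bounds n.
have [r_sq_le r_sq_gt] := Nat.sqrt_spec' n.
set h := n./2 in h_half *; set r := Nat.sqrt n in r_sq_le r_sq_gt *.
have r_sqrt : (r ^ 2 <= n < r.+1 ^ 2)%N by rewrite !expnS expn0 !muln1; lia.
set d := (r %/ 10)%N.
have [n_small|n_large] := leqP n 49.
- have -> : d = 0%N by rewrite /d divn_small //; nia.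
  rewrite subn0 addn0 addn1 big_nat1.
  by apply: leq_trans (bin_mid_mass n) _; rewrite leq_mul2r; lia.
have r_large : (7 <= r)%N by nia.
have r_lt_h : (r.+1 <= h)%N by nia.
have := binomial_chebyshev r_sqrt h_half r_lt_h ltac:(lia).
have := binomial_window_average (d := d) (R := r.+1) h_half ltac:(lia) r_lt_h ltac:(lia).
rewrite (_ : (h + r.+2 = h + r.+1 + 1)%N); last lia.
set Out := (\sum_(h - r.+1 <= p < h + r.+1 + 1) _)%N.
set In := (\sum_(h - d <= p < h + d + 1) _)%N => avg cheb.
rewrite -(@leq_pmul2l (3 * (2 * d + 1))); last by rewrite muln_gt0 addn1.
apply: (@leq_trans (4 * ((2 * d + 1) * Out))).
  by rewrite -mulnA mulnCA [X in (_ <= X)%N]mulnCA leq_mul2l cheb orbT.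
apply: (@leq_trans (4 * ((2 * r.+1 + 1) * In))); first by rewrite leq_mul2l avg orbT.
rewrite mulnA [X in (_ <= X)%N]mulnCA mulnA leq_mul2r; apply/orP; right.
rewrite /d; lia.
Qed.

Definition small_shift (n m E p : nat) : bool :=
  100 * ((2 * p)%:Z - n%:Z - E%:Z) ^+ 2 <= (36 * m)%N%:Z.

Lemma sqr_sub_le (R : realDomainType) (x y : R) : (x - y) ^+ 2 <= 2 * x ^+ 2 + 2 * y ^+ 2.
Proof.
have -> : 2 * x ^+ 2 + 2 * y ^+ 2 = (x - y) ^+ 2 + (x + y) ^+ 2 by ring.
by rewrite lerDl sqr_ge0.
Qed.

Lemma small_shift_central n m E p : (n <= m)%N -> (100 <= m)%N -> (100 * E ^ 2 <= m)%N ->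
  (n./2 - Nat.sqrt n %/ 10 <= p < n./2 + Nat.sqrt n %/ 10 + 1)%N -> small_shift n m E p.
Proof.
move=> le_nm m_large E_small p_in.
have h_half := half_bounds n.
have [r_sq_le _] := Nat.sqrt_spec' n.
set r := Nat.sqrt n in r_sq_le p_in; set d := (r %/ 10)%N in p_in.
have x_small : `|(2 * p)%:Z - n%:Z| <= `|(2 * d + 1)%N%:Z| by rewrite /d; lia.
have r_small : (10 * r <= m)%N by case: (leqP r 10); nia.
have d_small : (100 * (2 * d + 1) ^ 2 <= 9 * m)%N by rewrite /d; nia.
rewrite /small_shift; apply: le_trans (ler_wpM2l _ (sqr_sub_le _ _)) _ => //.
have := ler_sqr_norm x_small; rewrite !expr2 -!PoszM; lia.
Qed.

Lemma binomial_mass_small_shift n m E : (n <= m)%N -> (100 <= m)%N -> (100 * E ^ 2 <= m)%N ->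
  (2 ^ n <= 50 * \sum_(0 <= p < n.+1 | small_shift n m E p) 'C(n, p))%N.
Proof.
move=> le_nm m_large E_small; apply: leq_trans (central_window_mass n) _.
have r_le_n : (Nat.sqrt n <= n)%N by have := Nat.sqrt_le_lin n; lia.
rewrite leq_mul2l (big_nat_window _ _ (N := n.+1)); last first.
  by have := half_bounds n; lia.
apply/orP; right; apply: leq_sum_subpred => p p_in.
exact: small_shift_central.
Qed.

Definition threshold_split_mass (m K p : nat) : nat :=
  minn (\sum_(0 <= j < m.+1 | (j + K <= p + m)%N) 'C(m, j))
       (\sum_(0 <= j < m.+1 | (p + m < j + K)%N) 'C(m, j)).

Lemma threshold_split_mass_small_shift n m K p : (400 <= m)%N -> (n + m < 2 * K)%N ->
  small_shift n m (2 * K - (n + m)) p -> (2 ^ m <= 20 * threshold_split_mass m K p)%N.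
Proof.
move=> m_large K_large shift_p.
have [lower upper] := binomial_tails_large m_large shift_p.
rewrite /threshold_split_mass minnMr leq_min.
apply/andP; split; [apply: leq_trans lower _ | apply: leq_trans upper _]; rewrite leq_mul2l;
  apply/orP; right; apply: eq_leq; apply: eq_bigl => j; apply/idP/idP; lia.
Qed.

Lemma binomial_threshold_mass n m K : (n <= m)%N -> (400 <= m)%N -> (n + m < 2 * K)%N ->
  (100 * (2 * K - (n + m)) ^ 2 <= m)%N ->
  (2 ^ (n + m) <= 1000 * \sum_(0 <= p < n.+1) 'C(n, p) * threshold_split_mass m K p)%N.
Proof.
move=> le_nm m_large K_large E_small.
have := binomial_mass_small_shift le_nm (leq_trans (isT : 100 <= 400)%N m_large) E_small.
set G := (\sum_(0 <= p < n.+1 | _) _)%N => n_mass.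
have : (2 ^ m * G <= 20 * \sum_(0 <= p < n.+1) 'C(n, p) * threshold_split_mass m K p)%N.
  rewrite /G !big_distrr /=.
  apply: leq_trans (leq_sum_subpred _ _ _) => [|p _ //].
  apply: leq_sum => p shift_p; rewrite mulnCA mulnC leq_mul2l.
  by rewrite (threshold_split_mass_small_shift m_large K_large shift_p) orbT.
move=> fiber_mass; rewrite expnD mulnC; apply: leq_trans (leq_mul (leqnn _) n_mass) _.
by rewrite mulnCA -[1000%N]/(50 * 20)%N -mulnA leq_mul2l fiber_mass orbT.
Qed.

End BinomialEstimates.

Module CubeCounting.
Import ssrnat zify ring BinomialEstimates.

Lemma card_pairs_const (X Y : finType) (S : {set X}) (Q : X -> Y -> bool) (c : nat) :
  (forall x, x \in S -> #|[set y | Q x y]| = c) ->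
  #|[set u : X * Y | (u.1 \in S) && Q u.1 u.2]| = (#|S| * c)%N.
Proof.
move=> card_Q; rewrite -sum1_card.
have -> : (\sum_(u in [set u : X * Y | (u.1 \in S) && Q u.1 u.2]) 1 =
           \sum_(x in S) \sum_(y | Q x y) 1)%N.
  by rewrite pair_big_dep /=; apply: eq_bigl => [[x y]]; rewrite inE.
rewrite -sum_nat_const; apply: eq_bigr => x Sx.
by rewrite sum1_card -(card_Q x Sx); apply: eq_card => y; rewrite inE.
Qed.

Lemma leq_ratio_chain (m : nat) (L N : nat -> nat) :
  (forall j, (j < m)%N -> (N j * L j.+1 <= N j.+1 * L j)%N) ->
  (forall j, (j <= m)%N -> (0 < L j)%N) ->
  forall a b, (a <= b <= m)%N -> (N a * L b <= N b * L a)%N.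
Proof.
move=> step L_gt0 a b /andP[/subnKC <-]; elim: (b - a)%N => [|d IHd] le_m.
  by rewrite addn0.
have L_ad_gt0 : (0 < L (a + d))%N by apply: L_gt0; lia.
rewrite addnS -(leq_pmul2r L_ad_gt0).
apply: (@leq_trans (N (a + d) * L a * L (a + d).+1)).
  rewrite mulnAC leq_mul2r IHd ?orbT //; lia.
rewrite mulnAC [X in (_ <= X)%N]mulnAC leq_mul2r step ?orbT //; lia.
Qed.

Lemma minn_mass_le_disagreement (m k : nat) (L N : nat -> nat) :
  (forall j, (N j <= L j)%N) ->
  (forall j, (j < m)%N -> (N j * L j.+1 <= N j.+1 * L j)%N) ->
  (forall j, (j <= m)%N -> (0 < L j)%N) ->
  (minn (\sum_(0 <= j < m.+1 | (j < k)%N) L j) (\sum_(0 <= j < m.+1 | (k <= j)%N) L j) <=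
   \sum_(0 <= j < m.+1 | (j < k)%N) (L j - N j) + \sum_(0 <= j < m.+1 | (k <= j)%N) N j)%N.
Proof.
move=> N_le_L step L_gt0; have chain := leq_ratio_chain step L_gt0.
have [lt_mk|le_km] := ltnP m k.
  rewrite [X in minn _ X]big_nat_cond [X in minn _ X]big_pred0 ?minn0 // => j; lia.
(* Compare every level with level k: N j / L j <= N k / L k below k, >= from k on. *)
rewrite -(leq_pmul2l (L_gt0 k le_km)) mulnDr !big_distrr /=.
set Lo := (\sum_(0 <= j < m.+1 | (j < k)%N) L j)%N.
set Hi := (\sum_(0 <= j < m.+1 | (k <= j)%N) L j)%N.
apply: (@leq_trans ((L k - N k) * Lo + N k * Hi)).
  rewrite -{1}(subnK (N_le_L k)) mulnDl.
  by apply: leq_add; rewrite leq_mul2l ?geq_minl ?geq_minr orbT.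
apply: leq_add; rewrite big_distrr big_nat_cond [X in (_ <= X)%N]big_nat_cond /=.
  apply: leq_sum => j /andP[le_jm lt_jk].
  by rewrite mulnBr mulnBl leq_sub2l // mulnC chain //; lia.
apply: leq_sum => j /andP[le_jm le_kj].
by rewrite [X in (_ <= X)%N]mulnC chain //; lia.
Qed.

Lemma card_by_value (X : finType) (h : X -> nat) (N : nat) (P : pred X) :
  (forall x, (h x <= N)%N) ->
  #|[set x | P x]| = (\sum_(0 <= k < N.+1) #|[set x | P x && (h x == k)]|)%N.
Proof.
move=> le_hN; rewrite big_mkord -sum1_card.
rewrite (partition_big (fun x => (inord (h x) : 'I_N.+1)) predT) //=.
apply: eq_bigr => k _; rewrite -sum1_card; apply: eq_bigl => x; rewrite !inE.
by rewrite -val_eqE /= inordK // ltnS.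
Qed.

Section Levels.
Variable A : finType.
Implicit Types (s x : cube A) (g : cube A -> bool).

Definition ones x : {set A} := [set i | x i].
Definition weight_out s x : nat := #|~: ones s :&: ones x|.
Definition weight_in s x : nat := #|ones s :&: ones x|.

Lemma hweight_xorc s x :
  hweight (xorc x s) = (weight_out s x + (#|ones s| - weight_in s x))%N.
Proof.
rewrite /hweight /weight_out /weight_in -(cardsID (ones s)).
have -> : [set i | xorc x s i] :&: ones s = ones s :\: ones x.
  by apply/setP => i; rewrite !inE ffunE; case: (s i); case: (x i).
have -> : [set i | xorc x s i] :\: ones s = ~: ones s :&: ones x.
  by apply/setP => i; rewrite !inE ffunE; case: (s i); case: (x i).
by have := cardsID (ones x) (ones s); lia.
Qed.

Lemma weight_out_le s x : (weight_out s x <= #|~: ones s|)%N.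
Proof. exact/subset_leq_card/subsetIl. Qed.

Lemma weight_in_le s x : (weight_in s x <= #|ones s|)%N.
Proof. exact/subset_leq_card/subsetIl. Qed.

Lemma ones_bij : bijective ones.
Proof.
exists (fun B : {set A} => [ffun i => i \in B] : cube A) => [x | B].
  by apply/ffunP => i; rewrite ffunE inE.
by apply/setP => i; rewrite inE ffunE.
Qed.

Lemma card_cube_ones (P : pred {set A}) :
  #|[set x : cube A | P (ones x)]| = #|[set B | P B]|.
Proof.
rewrite -(on_card_preimset (onW_bij _ ones_bij)).
by apply: eq_card => x; rewrite !inE.
Qed.

Lemma setI_setU_split (T B1 B2 : {set A}) : B1 \subset ~: T -> B2 \subset T ->
  ~: T :&: (B1 :|: B2) = B1 /\ T :&: (B1 :|: B2) = B2.
Proof.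
move=> sub1 sub2; rewrite !setIUr (setIidPr sub1) (setIidPr sub2).
have /eqP -> : ~: T :&: B2 == set0 by rewrite setIC -setDE setD_eq0.
have /eqP -> : T :&: B1 == set0 by rewrite setIC -[T in _ :&: T]setCK -setDE setD_eq0.
by rewrite setU0 set0U.
Qed.

Lemma card_split_sets (T : {set A}) (p j : nat) :
  #|[set B : {set A} | (#|~: T :&: B| == p) && (#|T :&: B| == j)]| =
  ('C(#|~: T|, p) * 'C(#|T|, j))%N.
Proof.
rewrite -!cards_draws -cardsX -(@card_in_imset _ _ (fun u => u.1 :|: u.2)).
  congr #|pred_of_set _|; apply/setP => B; rewrite inE; apply/idP/imsetP.
    move=> /andP[p_out j_in]; exists (~: T :&: B, T :&: B).
      by rewrite !inE /= !subsetIl p_out j_in.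
    by rewrite /= -setIUl setUC setUCr setTI.
  move=> [[B1 B2]]; rewrite !inE /= => /andP[/andP[s1 c1] /andP[s2 c2]] ->.
  by have [-> ->] := setI_setU_split s1 s2; rewrite c1 c2.
move=> [B1 B2] [C1 C2]; rewrite !inE /= => /andP[/andP[s1 _] /andP[s2 _]].
move=> /andP[/andP[t1 _] /andP[t2 _]] /= eqU.
have [e1 e2] := setI_setU_split s1 s2; have [f1 f2] := setI_setU_split t1 t2.
by congr pair; [rewrite -e1 -f1 eqU | rewrite -e2 -f2 eqU].
Qed.

Lemma card_level s (p j : nat) :
  #|[set x | (weight_out s x == p) && (weight_in s x == j)]| =
  ('C(#|~: ones s|, p) * 'C(#|ones s|, j))%N.
Proof.
rewrite -card_split_sets.
exact: (card_cube_ones (fun B => (#|~: ones s :&: B| == p) && (#|ones s :&: B| == j))).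
Qed.

Definition flip x (i : A) : cube A := [ffun k => if k == i then ~~ x i else x k].

Lemma flip_pairK : involutive (fun u : cube A * A => (flip u.1 u.2, u.2)).
Proof.
move=> [x i] /=; congr pair; apply/ffunP => k; rewrite !ffunE.
by case: eqP => [->|_]; rewrite ?eqxx ?negbK.
Qed.

Lemma ones_flip x i : ~~ x i -> ones (flip x i) = i |: ones x.
Proof. by move=> xi; apply/setP => k; rewrite !inE ffunE; case: eqP => [->|]. Qed.

Lemma flip_ge x i : ~~ x i -> forall k, x k ==> flip x i k.
Proof. by move=> xi k; rewrite ffunE; case: eqP => [->|_]; rewrite ?(negbTE xi) ?implybb. Qed.

Definition level g s (p j : nat) : {set cube A} :=
  [set x | (weight_out s x == p) && (weight_in s x == j) && g x].

Lemma flip_level g s p j x i : monotone g -> x \in level g s p j -> i \in ones s -> ~~ x i ->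
  flip x i \in level g s p j.+1.
Proof.
move=> g_mono + si xi; rewrite !inE => /andP[/andP[/eqP <- /eqP <-] gx].
rewrite /weight_out /weight_in ones_flip // !setIUr.
have -> : ones s :&: [set i] = [set i] by apply/setIidPr; rewrite sub1set.
have -> : ~: ones s :&: [set i] = set0.
  by apply/eqP; rewrite setIC setI_eq0 disjoints1 inE negbK.
rewrite set0U cardsU1 !inE (negbTE xi) andbF add1n !eqxx /=.
exact: (implyP (g_mono _ _ (flip_ge xi)) gx).
Qed.

Lemma level_lym g s p j : monotone g ->
  ((#|ones s| - j) * #|level g s p j| <= j.+1 * #|level g s p j.+1|)%N.
Proof.
move=> g_mono.
set up := [set u : cube A * A | (u.1 \in level g s p j) && ((u.2 \in ones s) && ~~ u.1 u.2)].
set down := [set u : cube A * A | (u.1 \in level g s p j.+1) && ((u.2 \in ones s) && u.1 u.2)].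
have card_up : #|up| = (#|level g s p j| * (#|ones s| - j))%N.
  apply: (card_pairs_const (Q := fun x i => (i \in ones s) && ~~ x i)) => x.
  rewrite inE => /andP[/andP[_ /eqP <-] _].
  rewrite -(cardsID (ones x) (ones s)) addKn; apply: eq_card => i; rewrite !inE.
  by rewrite andbC.
have card_down : #|down| = (#|level g s p j.+1| * j.+1)%N.
  apply: (card_pairs_const (Q := fun x i => (i \in ones s) && x i)) => x.
  rewrite inE => /andP[/andP[_ /eqP <-] _].
  by apply: eq_card => i; rewrite !inE.
have flip_up : (fun u : cube A * A => (flip u.1 u.2, u.2)) @: up \subset down.
  apply/subsetP => _ /imsetP[[x i] up_xi ->]; move: up_xi.
  rewrite inE /= => /andP[lx /andP[si xi]].
  by rewrite inE /= flip_level // si ffunE eqxx xi.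
have := subset_leq_card flip_up; rewrite card_imset; last exact: inv_inj flip_pairK.
by rewrite card_up card_down mulnC [X in (_ <= X)%N]mulnC.
Qed.

Lemma card_level_le g s p j :
  (#|level g s p j| <= 'C(#|~: ones s|, p) * 'C(#|ones s|, j))%N.
Proof.
rewrite -card_level; apply/subset_leq_card/subsetP => x.
by rewrite !inE => /andP[->].
Qed.

Lemma card_level_ratio g s p j : monotone g -> (j < #|ones s|)%N ->
  (#|level g s p j| * ('C(#|~: ones s|, p) * 'C(#|ones s|, j.+1)) <=
   #|level g s p j.+1| * ('C(#|~: ones s|, p) * 'C(#|ones s|, j)))%N.
Proof.
move=> g_mono lt_jm; set c := 'C(#|~: ones s|, p); set m := #|ones s|.
rewrite -(leq_pmul2l (ltn0Sn j)).
have -> : (j.+1 * (#|level g s p j| * (c * 'C(m, j.+1))) =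
           c * 'C(m, j) * ((m - j) * #|level g s p j|))%N.
  transitivity (c * #|level g s p j| * (j.+1 * 'C(m, j.+1)))%N; first ring.
  by rewrite mul_bin_left; ring.
have -> : (j.+1 * (#|level g s p j.+1| * (c * 'C(m, j))) =
           c * 'C(m, j) * (j.+1 * #|level g s p j.+1|))%N by ring.
by rewrite leq_mul2l level_lym ?orbT.
Qed.

Definition disagreement s (K : nat) g : {set cube A} :=
  [set x | (K <= weight_out s x + (#|ones s| - weight_in s x))%N != g x].

Lemma card_level_disagreement s K g (p j : nat) : (j <= #|ones s|)%N ->
  #|[set x | (x \in disagreement s K g) && (weight_out s x == p) && (weight_in s x == j)]| =
  if (j + K <= p + #|ones s|)%N
  then ('C(#|~: ones s|, p) * 'C(#|ones s|, j) - #|level g s p j|)%N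
  else #|level g s p j|.
Proof.
move=> le_jm; set F := [set x | (weight_out s x == p) && (weight_in s x == j)].
have -> : level g s p j = F :&: [set x | g x] by apply/setP => x; rewrite !inE.
rewrite -card_level -/F -cardsD; case: ifP => threshold; apply: eq_card => x; rewrite !inE;
  have [out_p|] := eqVneq (weight_out s x) p; have [in_j|] := eqVneq (weight_in s x) j;
  rewrite ?andbF ?andbT //= out_p in_j.
- have -> : (K <= p + (#|ones s| - j))%N = true by lia.
  by case: (g x).
- have -> : (K <= p + (#|ones s| - j))%N = false by lia.
  by case: (g x).
Qed.

Lemma fiber_disagreement s K g (p : nat) : monotone g -> (p <= #|~: ones s|)%N ->
  ('C(#|~: ones s|, p) * threshold_split_mass #|ones s| K p <=
   #|[set x | (x \in disagreement s K g) && (weight_out s x == p)]|)%N.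
Proof.
move=> g_mono le_pn; set m := #|ones s|; set n := #|~: ones s|.
pose L j := ('C(n, p) * 'C(m, j))%N; pose N j := #|level g s p j|.
have L_gt0 j : (j <= m)%N -> (0 < L j)%N by rewrite /L muln_gt0 !bin_gt0 le_pn => ->.
have below (F : nat -> nat) : (\sum_(0 <= j < m.+1 | (j < p + m + 1 - K)%N) F j =
    \sum_(0 <= j < m.+1 | (j + K <= p + m)%N) F j)%N.
  by apply: eq_bigl => j; apply/idP/idP; lia.
have above (F : nat -> nat) : (\sum_(0 <= j < m.+1 | (p + m + 1 - K <= j)%N) F j =
    \sum_(0 <= j < m.+1 | (p + m < j + K)%N) F j)%N.
  by apply: eq_bigl => j; apply/idP/idP; lia.
have := minn_mass_le_disagreement (p + m + 1 - K) (card_level_le g s p)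
  (fun j => @card_level_ratio g s p j g_mono) L_gt0.
rewrite !below !above => mass.
rewrite /threshold_split_mass minnMr !big_distrr /=.
rewrite (card_by_value (h := weight_in s) (N := m)); last exact: weight_in_le.
rewrite [X in (_ <= X)%N]big_nat_cond.
rewrite [X in (_ <= X)%N](eq_bigr (fun j => if (j + K <= p + m)%N then L j - N j else N j)%N);
  last by move=> j /andP[/andP[_ le_jm] _]; apply: card_level_disagreement.
rewrite -big_nat_cond [X in (_ <= X)%N](bigID (fun j => j + K <= p + m)%N) /=.
rewrite [X in (_ <= X + _)%N](eq_bigr (fun j => L j - N j)%N) => [|j ->] //.
rewrite [X in (_ <= _ + X)%N](eq_bigr N) => [|j /negbTE ->] //.
rewrite [X in (_ <= _ + X)%N](eq_bigl (fun j => p + m < j + K)%N) => [|j]; last first.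
  by rewrite ltnNge.
exact: mass.
Qed.

Lemma disagreement_ge s K g : monotone g ->
  (\sum_(0 <= p < #|~: ones s|.+1) 'C(#|~: ones s|, p) * threshold_split_mass #|ones s| K p <=
   #|disagreement s K g|)%N.
Proof.
move=> g_mono.
have -> : #|disagreement s K g| = #|[set x | x \in disagreement s K g]|.
  by apply: eq_card => x; rewrite inE.
rewrite (card_by_value (h := weight_out s) (N := #|~: ones s|)); last exact: weight_out_le.
rewrite big_nat_cond [X in (_ <= X)%N]big_nat_cond.
by apply: leq_sum => p /andP[/andP[_ le_pn] _]; apply: fiber_disagreement.
Qed.

End Levels.
End CubeCounting.

Module RealThreshold.
Import ssrnat zify BinomialEstimates CubeCounting.
Local Open Scope R_scope.

Lemma nat_threshold (th : R) : 0 <= th ->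
  exists K : nat, INR K <= th + 1 /\ forall w : nat, th < INR w <-> (K <= w)%N.
Proof.
move=> th_ge0; have [up_gt up_le] := archimed th.
have up_gt0 : (0 < up th)%Z by apply: lt_IZR; lra.
exists (Z.to_nat (up th)).
rewrite INR_IZR_INZ Znat.Z2Nat.id; last lia.
split; first lra.
move=> w; split => [lt_th_w | /leP le_up_w].
- apply/leP; suff : (up th <= Z.of_nat w)%Z by lia.
  case: (Z.lt_ge_cases (Z.of_nat w) (up th)) => [lt_w_up|//].
  have : IZR (Z.of_nat w) <= IZR (up th) - 1 by rewrite -minus_IZR; apply: IZR_le; lia.
  rewrite -INR_IZR_INZ; lra.
- have : IZR (up th) <= INR w by rewrite INR_IZR_INZ; apply: IZR_le; lia.
  lra.
Qed.

Lemma threshold_excess_small (a m K : nat) (c1 : R) : 0 < c1 < 1/100 ->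
  (a <= 2 * m)%N -> (1000 <= m)%N -> INR K <= INR a / 2 + c1 * sqrt (INR a) + 1 ->
  (a < 2 * K)%N -> (100 * (2 * K - a) ^ 2 <= m)%N.
Proof.
move=> c1_small le_a_2m m_large K_le a_lt.
set E := (2 * K - a)%N; set y := sqrt (INR a).
have INR_E : INR E + INR a = 2 * INR K.
  by rewrite -plus_INR (_ : (E + a = 2 * K)%coq_nat) ?mult_INR //; rewrite /E; lia.
have y_ge0 : 0 <= y by apply: sqrt_pos.
have y_sq : y * y = INR a by apply: sqrt_sqrt; apply: pos_INR.
have a_le : INR a <= 2 * INR m by rewrite -(INR_IZR_INZ 2) -mult_INR; apply/le_INR/leP.
have m_ge : 1000 <= INR m by rewrite -(INR_IZR_INZ 1000); apply/le_INR/leP.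
have E_le : INR E <= 2 / 100 * y + 2.
  have : 0 <= (1/100 - c1) * y by apply: Rmult_le_pos; lra.
  rewrite /y in K_le *; lra.
have E_sq : 100 * (INR E * INR E) <= INR m.
  have : INR E * INR E <= (2 / 100 * y + 2) * (2 / 100 * y + 2).
    by apply: Rmult_le_compat; try lra; apply: pos_INR.
  have := Rle_0_sqr (y - 100); rewrite /Rsqr; lra.
suff : (100 * (E * E) <= m)%coq_nat by rewrite expnS expn1; lia.
by apply: INR_le; rewrite !mult_INR (INR_IZR_INZ 100).
Qed.

Lemma fdist_ge_inv (A : finType) (f g : cube A -> bool) (k : nat) : (0 < k)%N ->
  (2 ^ #|A| <= k * #|[set x | f x != g x]|)%N -> 1 / INR k <= fdist f g.
Proof.
move=> k_gt0 /leP count; rewrite /fdist card_ffun card_bool.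
set D := #|[set x | f x != g x]|.
have k_pos : 0 < INR k by apply/lt_0_INR/ltP.
have cube_pos : 0 < INR (2 ^ #|A|) by apply/lt_0_INR/ltP; rewrite expn_gt0.
have := le_INR _ _ count; rewrite mult_INR => le_count.
have cube_le : INR (2 ^ #|A|) / INR k <= INR D.
  apply: (Rmult_le_reg_l (INR k)) => //.
  by rewrite /Rdiv -Rmult_assoc Rinv_r_simpl_m //; lra.
have -> : 1 / INR k = INR (2 ^ #|A|) / INR k / INR (2 ^ #|A|) by field; lra.
by apply: Rmult_le_compat_r => //; left; apply: Rinv_0_lt_compat.
Qed.

Lemma eq_fdist (A : finType) (f f' g : cube A -> bool) : f =1 f' -> fdist f g = fdist f' g.
Proof.
move=> eq_f; rewrite /fdist (eq_card (B := [set x | f' x != g x])) // => x.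
by rewrite !inE eq_f.
Qed.

Lemma hm0_xorc_threshold (A : finType) (c1 : R) (K : nat) (s x : cube A) :
  (forall w : nat, INR #|A| / 2 + c1 * sqrt (INR #|A|) < INR w <-> (K <= w)%N) ->
  hm0 c1 (xorc x s) = (K <= weight_out s x + (#|ones s| - weight_in s x))%N.
Proof.
move=> K_spec; rewrite /hm0 -hweight_xorc.
by case: Rlt_dec => [/K_spec -> //| lt_w]; apply/esym/negP => /K_spec.
Qed.

Lemma hm0_far_from_monotone (A : finType) (s : cube A) (c1 : R) : 0 < c1 < 1/100 ->
  (2000 <= #|A|)%N -> (#|A| <= 2 * #|ones s|)%N ->
  forall g, monotone g -> 1 / 1000 <= fdist (fun x => hm0 c1 (xorc x s)) g.
Proof.
move=> c1_small A_large s_large g g_mono.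
have sqrt_term : 0 <= c1 * sqrt (INR #|A|) by apply: Rmult_le_pos; [lra | apply: sqrt_pos].
have th_ge0 : 0 <= INR #|A| / 2 + c1 * sqrt (INR #|A|) by have := pos_INR #|A|; lra.
have [K [K_le K_spec]] := nat_threshold th_ge0.
have A_split : (#|~: ones s| + #|ones s| = #|A|)%N by rewrite addnC cardsC.
have A_lt_2K : (#|A| < 2 * K)%N.
  have : INR #|A| < INR (K + K).
    by rewrite plus_INR; have := proj2 (K_spec K) (leqnn K); lra.
  by move/INR_lt; lia.
have := threshold_excess_small c1_small s_large ltac:(lia) K_le A_lt_2K.
rewrite -A_split in A_lt_2K * => E_small.
have := binomial_threshold_mass (n := #|~: ones s|) (m := #|ones s|) ltac:(lia) ltac:(lia)
  A_lt_2K E_small.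
rewrite A_split => mass.
rewrite -[1000]/(IZR (Z.of_nat 1000)) -INR_IZR_INZ; apply: fdist_ge_inv => //.
apply: leq_trans mass _; rewrite leq_mul2l; apply/orP; right.
apply: leq_trans (disagreement_ge s K g_mono) _.
by apply/eq_leq/eq_card => x; rewrite !inE (hm0_xorc_threshold _ _ K_spec).
Qed.

Lemma hm1_xorc_compl (A : finType) (c1 : R) (x r : cube A) :
  hm1 c1 (xorc x r) = hm0 c1 (xorc x [ffun i => ~~ r i]).
Proof.
have weights : (hweight (xorc x [ffun i => ~~ r i]) + hweight (xorc x r) = #|A|)%N.
  rewrite /hweight addnC -[X in (_ = X)%N](cardsC [set i | xorc x r i]).
  by congr (_ + _)%N; apply: eq_card => i; rewrite !inE !ffunE; case: (x i); case: (r i).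
rewrite /hm1 /hm0 (_ : hweight (xorc x [ffun i => ~~ r i]) = #|A| - hweight (xorc x r))%coq_nat;
  last lia.
rewrite minus_INR; last lia.
by case: Rlt_dec => lt1; case: Rlt_dec => lt2 //; lra.
Qed.

Lemma ones_compl_large (A : finType) (r : cube A) : ~~ (#|A| <= 2 * #|ones r|)%N ->
  (#|A| <= 2 * #|ones [ffun i => ~~ r i]|)%N.
Proof.
have -> : ones [ffun i => ~~ r i] = ~: ones r by apply/setP => i; rewrite !inE ffunE.
by have := cardsC (ones r); lia.
Qed.

End RealThreshold.

Import CubeCounting RealThreshold.

Theorem mainTheorem7 :
  exists delta : R, (0 < delta)%R /\
  forall c1 : R, (0 < c1 < 1/100)%R ->
  exists a0 : nat, forall (A : finType), (a0 <= #|A|)%N ->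
  forall r : cube A,
    (forall g : cube A -> bool, monotone g ->
       (delta <= fdist (fun x => hm0 c1 (xorc x r)) g)%R) \/
    (forall g : cube A -> bool, monotone g ->
       (delta <= fdist (fun x => hm1 c1 (xorc x r)) g)%R).
Proof.
exists (1 / 1000)%R; split; first lra.
move=> c1 c1_small; exists 2000%N => A A_large r.
have [r_large|r_small] := boolP (#|A| <= 2 * #|ones r|)%N.
- by left; apply: hm0_far_from_monotone.
- right => g g_mono; rewrite (eq_fdist g (fun x => hm1_xorc_compl c1 x r)).
  exact: hm0_far_from_monotone (ones_compl_large r_small) g g_mono.
Qed.
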